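(* Let $(\Gamma,\tau)$ be a $z$-oriented triangulation of a connected closed $2$-dimensional surface, and let $\Gamma_{\tau}$ be its transition digraph and $\mathcal{X}_{\tau}$ its Markov chain. Then: (1) for every vertex $v$ of $\Gamma_{\tau}$ there exists a closed directed walk of length $3$ in $\Gamma_{\tau}$ passing through $v$; (2) $\mathcal{X}_{\tau}$ is irreducible.
   Context: A triangulation $\Gamma$ of a connected closed surface $M$ (not necessarily orientable) is a closed $2$-cell embedding of a connected finite simple graph in $M$ all of whose faces are triangles. Two edges are adjacent if they are distinct and lie in a common face; two faces are adjacent if distinct and their intersection is an edge. A zigzag is a sequence of edges $(e_i)_{i\in\mathbb{N}}$ such that for every $i$: $e_i,e_{i+1}$ are adjacent, the faces containing $e_i,e_{i+1}$ and $e_{i+1},e_{i+2}$ are adjacent, and $e_i,e_{i+2}$ are disjoint; it is a cyclic sequence, equivalently a cyclic vertex sequence $v_1,\dots,v_n$ with $e_i=v_iv_{i+1}$, traversing $e_i$ from $v_i$ to $v_{i+1}$. $Z^{-1}$ denotes the reversed zigzag. A $z$-orientation $\tau$ is a set of zigzags containing exactly one of $Z,Z^{-1}$ for every zigzag $Z$. Every edge is traversed exactly twice in total by zigzags of $\tau$; it is of type I if the two traversals are in opposite directions, of type II if in the same direction (then it is regarded as directed that way). Each face either has two type I edges and one type II edge (type I face) or three type II edges forming a directed cycle (type II face). Transition digraph and chain: on vertex set $V=\{v_1,\dots,v_n\}$, let $d(v)$ be the number of type I edges at $v$ plus twice the number of type II edges directed out of $v$. Set $p_{ij}=1/d(v_i)$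 if $v_iv_j$ is an edge of type I, $p_{ij}=2/d(v_i)$ if $v_iv_j$ is a type II edge directed from $v_i$ to $v_j$, and $p_{ij}=0$ otherwise. $\Gamma_{\tau}$ is the digraph on $V$ with a directed edge $v_i\to v_j$ exactly when $p_{ij}>0$ (so each type I edge gives two opposite directed edges and each type II edge one directed edge), and $\mathcal{X}_{\tau}$ is the time-homogeneous Markov chain on $V$ with transition matrix $[p_{ij}]$. The length of a walk is the number of edges traversed, with multiplicity. *)

From mathcomp Require Import all_boot all_order all_algebra.
Set Implicit Arguments. Unset Strict Implicit. Unset Printing Implicit Defensive.
Import Order.TTheory GRing.Theory Num.Theory.

Section Triangulation.
Variable V : finType.
Variable faces : {set {set V}}.

Definition adj (u v : V) : bool :=
  (u != v) && [exists f in faces, (u \in f) && (v \in f)].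

Definition link (v : V) (x y : V) : bool := [set v; x; y] \in faces.

Definition triangulation : Prop :=
  [/\ (forall f, f \in faces -> #|f| = 3),
      (forall u v, adj u v ->
         #|[set f in faces | (u \in f) && (v \in f)]| = 2),
      (forall v, exists2 f, f \in faces & v \in f),
      faces != set0 &
      (forall u v, connect adj u v)] /\
      (* the link of every vertex is connected (so it is a single cycle,
         i.e. every vertex has a disk neighbourhood) *)
      (forall v x y, adj v x -> adj v y -> connect (link v) x y).

(* A zigzag
   with cyclic vertex sequence v_1,...,v_n is encoded by the cyclic sequence of
   its consecutive triples (v_i, v_(i+1), v_(i+2)); the i-th triple records
   the traversal of e_i = v_i v_(i+1) from v_i to v_(i+1). *)
Definition flag := (V * V * V)%type.
Definition is_flag (t : flag) : bool := [set t.1.1; t.1.2; t.2] \in faces.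

Definition other_vertex (a b c : V) : V :=
  odflt a [pick d | ([set b; c; d] \in faces) && (d != a)].

(* The zigzag conditions (consecutive edges adjacent, consecutive faces
   adjacent, e_i and e_(i+2) disjoint) force v_(i+3) to be this vertex. *)
Definition zsucc (t : flag) : flag :=
  (t.1.2, t.2, other_vertex t.1.1 t.1.2 t.2).

Definition zigzag (Z : {set flag}) : Prop :=
  exists2 t, is_flag t & Z = [set x | fconnect zsucc t x].

Definition zrev (Z : {set flag}) : {set flag} :=
  [set (t.2, t.1.2, t.1.1) | t in Z].

Definition z_orientation (tau : {set {set flag}}) : Prop :=
  (forall Z, Z \in tau -> zigzag Z) /\
  (forall Z, zigzag Z ->
     (Z \in tau \/ zrev Z \in tau) /\
     (Z \in tau -> zrev Z \in tau -> Z = zrev Z)).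

Variable tau : {set {set flag}}.

Definition trav (a b : V) : nat :=
  \sum_(Z in tau) #|[set t in Z | (t.1.1 == a) && (t.1.2 == b)]|.

Definition typeI (a b : V) : bool := [&& adj a b, 0 < trav a b & 0 < trav b a].
Definition typeII (a b : V) : bool := [&& adj a b, 0 < trav a b & trav b a == 0].

Definition zdeg (v : V) : nat :=
  #|[set u | typeI v u]| + 2 * #|[set u | typeII v u]|.

Definition tarc (a b : V) : bool := typeI a b || typeII a b.

Local Open Scope ring_scope.
Variable R : realFieldType.

Definition ptrans (i j : V) : R :=
  if typeI i j then (zdeg i)%:R^-1
  else if typeII i j then 2 / (zdeg i)%:R
  else 0.

Fixpoint pstep (n : nat) (i j : V) : R :=
  match n with
  | 0 => (i == j)%:R
  | n.+1 => \sum_(k : V) ptrans i k * pstep n k j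
  end.

Definition chain_irreducible : Prop :=
  forall i j : V, exists n : nat, 0 < pstep n i j.

End Triangulation.

From mathcomp Require Import all_boot all_order all_algebra.
Set Implicit Arguments. Unset Strict Implicit. Unset Printing Implicit Defensive.
Import Order.TTheory GRing.Theory Num.Theory.

(* Every face {a,b,c} is swept by the zigzag through the flag (c,b,a) or by its
   reverse, so some zigzag of tau passes through it as a -> b -> c or as
   c -> b -> a; the next flag of that zigzag starts with b c (resp. b a), so
   both edges of the passage are traversed in its direction.  Doing this for
   the three rotations of the face shows that every face is a directed
   3-cycle of the transition digraph.  Hence every vertex lies on a directed
   triangle, each edge of the connected graph can be crossed in either
   direction by a directed path of length at most 2, and a directed path of
   length n gives a positive n-step transition probability. *)

Section SetsOfThree.
Variable T : finType.

Lemma set3_rot (a b c : T) : [set a; b; c] = [set b; c; a].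
Proof.
by apply/setP => x; rewrite !inE; case: (x == a); case: (x == b); case: (x == c).
Qed.

Lemma set3_rev (a b c : T) : [set a; b; c] = [set c; b; a].
Proof.
by apply/setP => x; rewrite !inE; case: (x == a); case: (x == b); case: (x == c).
Qed.

Lemma card_set3_neq (a b c : T) :
  #|[set a; b; c]| = 3 -> [/\ a != b, b != c & c != a].
Proof.
rewrite (eq_sym c) -setUA cardsU1 cards2 !inE negb_or.
by case: (a == b); case: (a == c); case: (b == c).
Qed.

Lemma card3_split (f : {set T}) (x y : T) :
  #|f| = 3 -> x \in f -> y \in f -> x != y -> exists z, f = [set x; y; z].
Proof.
move=> f3 fx fy xy.
have fxy : y \in f :\ x by rewrite !inE eq_sym xy.
have /cards1P[z fxyz] : #|f :\ x :\ y| == 1.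
  by move: f3; rewrite (cardsD1 x) fx (cardsD1 y (f :\ x)) fxy !add1n => -[->].
by exists z; rewrite -(setD1K fx) -(setD1K fxy) fxyz setUA.
Qed.

Lemma card3_other (f : {set T}) (x : T) :
  #|f| = 3 -> x \in f -> exists2 y, y \in f & x != y.
Proof.
move=> f3 fx; have : 0 < #|f :\ x| by move: f3; rewrite (cardsD1 x) fx add1n => -[->].
by case/card_gt0P => y; rewrite !inE => /andP[yx fy]; exists y; rewrite // eq_sym.
Qed.

End SetsOfThree.

Definition directed_triangle (T : Type) (r : rel T) (a b c : T) : bool :=
  [&& r a b, r b c & r c a].

Lemma rotations_directed_triangle (T : Type) (r : rel T) (a b c : T) :
  r a b && r b c || r c b && r b a ->
  r b c && r c a || r a c && r c b ->
  r c a && r a b || r b a && r a c ->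
  directed_triangle r a b c || directed_triangle r a c b.
Proof.
rewrite /directed_triangle.
by case: (r a b); case: (r b c); case: (r c a); case: (r b a); case: (r c b);
  case: (r a c).
Qed.

Lemma directed_triangle_connect (T : finType) (r : rel T) (a b c : T) :
  directed_triangle r a b c || directed_triangle r a c b -> connect r a b.
Proof.
case/orP=> /and3P[rab rbc rca]; first exact: connect1.
exact: connect_trans (connect1 rab) (connect1 rbc).
Qed.

Section ZigzagOrientation.
Variables (V : finType) (faces : {set {set V}}) (tau : {set {set flag V}}).

Definition traversed (t : flag V) : Prop := exists2 Z, Z \in tau & t \in Z.

Lemma traversed_zsucc (t : flag V) :
  (forall Z, Z \in tau -> zigzag faces Z) ->
  traversed t -> traversed (zsucc faces t).
Proof.
move=> tau_zz [Z tauZ Zt]; exists Z => //.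
case: (tau_zz Z tauZ) => t0 _ defZ; rewrite defZ !inE in Zt *.
by apply: connect_trans Zt (connect1 _); rewrite /= eqxx.
Qed.

Lemma traversed_trav_gt0 (a b c : V) : traversed (a, b, c) -> 0 < trav tau a b.
Proof.
case=> Z tauZ Zt; rewrite /trav (bigD1 Z) //= ltn_addr //.
by apply/card_gt0P; exists (a, b, c); rewrite inE Zt !eqxx.
Qed.

Lemma face_traversed (a b c : V) :
  z_orientation faces tau -> [set a; b; c] \in faces ->
  traversed (a, b, c) \/ traversed (c, b, a).
Proof.
case=> _ orient face_abc.
set Z := [set t | fconnect (zsucc faces) (c, b, a) t].
have Z_cba : (c, b, a) \in Z by rewrite inE connect0.
have zzZ : zigzag faces Z by exists (c, b, a); rewrite // /is_flag /= -set3_rev.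
case: (orient Z zzZ) => -[tauZ | tauZr] _; first by right; exists Z.
by left; exists (zrev Z) => //; apply/imsetP; exists (c, b, a).
Qed.

Lemma face_trav_path (a b c : V) :
  z_orientation faces tau -> [set a; b; c] \in faces ->
  (0 < trav tau a b) && (0 < trav tau b c) ||
  (0 < trav tau c b) && (0 < trav tau b a).
Proof.
move=> orient face_abc.
have trav2 x y z : traversed (x, y, z) ->
    (0 < trav tau x y) && (0 < trav tau y z).
  move=> txyz; rewrite (traversed_trav_gt0 txyz).
  exact: traversed_trav_gt0 (traversed_zsucc orient.1 txyz).
by case: (face_traversed orient face_abc) => /trav2 ->; rewrite ?orbT.
Qed.

Lemma tarcE (a b : V) : adj faces a b -> tarc faces tau a b = (0 < trav tau a b).
Proof.
move=> ab; rewrite /tarc /typeI /typeII ab.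
by case: (trav tau b a) => [|n]; rewrite /= ?andbT ?andbF ?orbF.
Qed.

Lemma face_directed_triangle (a b c : V) :
  (forall f, f \in faces -> #|f| = 3) -> z_orientation faces tau ->
  [set a; b; c] \in faces ->
  directed_triangle (tarc faces tau) a b c ||
  directed_triangle (tarc faces tau) a c b.
Proof.
move=> faces3 orient face_abc.
have [ab bc ca] := card_set3_neq (faces3 _ face_abc).
have adj_abc x y : x \in [set a; b; c] -> y \in [set a; b; c] -> x != y ->
    adj faces x y.
  by move=> fx fy xy; rewrite /adj xy; apply/existsP; exists [set a; b; c];
    rewrite face_abc fx fy.
rewrite /directed_triangle !tarcE ?adj_abc ?inE ?eqxx ?orbT // 1?eq_sym //.
have face_bca : [set b; c; a] \in faces by rewrite -set3_rot.
have face_cab : [set c; a; b] \in faces by rewrite set3_rot.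
by apply: (@rotations_directed_triangle _ (fun x y => 0 < trav tau x y));
  apply: face_trav_path.
Qed.

Lemma edge_directed_triangle (f : {set V}) (x y : V) :
  (forall f, f \in faces -> #|f| = 3) -> z_orientation faces tau ->
  f \in faces -> x \in f -> y \in f -> x != y ->
  exists z, directed_triangle (tarc faces tau) x y z ||
            directed_triangle (tarc faces tau) x z y.
Proof.
move=> faces3 orient ff fx fy xy; have [z defF] := card3_split (faces3 _ ff) fx fy xy.
by exists z; apply: face_directed_triangle; rewrite // -defF.
Qed.

End ZigzagOrientation.

Section TransitionChain.
Variables (V : finType) (faces : {set {set V}}) (tau : {set {set flag V}}).
Variable R : realFieldType.
Local Open Scope ring_scope.

Lemma ptrans_ge0 (i j : V) : 0 <= ptrans faces tau R i j.
Proof.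
rewrite /ptrans; case: ifP => _; first by rewrite invr_ge0 ler0n.
by case: ifP => _ //; rewrite divr_ge0 ?ler0n.
Qed.

Lemma ptrans_gt0 (i j : V) : tarc faces tau i j -> 0 < ptrans faces tau R i j.
Proof.
move=> ij; have deg_gt0 : (0 < zdeg faces tau i)%N.
  rewrite /zdeg; case/orP: ij => ij.
    by apply: ltn_addr; apply/card_gt0P; exists j; rewrite inE.
  by apply: ltn_addl; rewrite muln_gt0 /=; apply/card_gt0P; exists j; rewrite inE.
rewrite /ptrans; case: ifP => [_ | notI]; first by rewrite invr_gt0 ltr0n.
by move: ij; rewrite /tarc notI /= => ->; rewrite divr_gt0 ?ltr0n.
Qed.

Lemma pstep_ge0 (n : nat) (i j : V) : 0 <= pstep faces tau R n i j.
Proof.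
elim: n i => [|n IHn] i /=; first by rewrite ler0n.
by apply: sumr_ge0 => k _; rewrite mulr_ge0 ?ptrans_ge0.
Qed.

Lemma pstep_path_gt0 (i : V) (p : seq V) :
  path (tarc faces tau) i p -> 0 < pstep faces tau R (size p) i (last i p).
Proof.
elim: p i => [|k p IHp] i /=; first by rewrite eqxx ltr01.
case/andP=> ik kp; rewrite (bigD1 k) //= ltr_wpDr ?mulr_gt0 ?ptrans_gt0 ?IHp //.
by apply: sumr_ge0 => l _; rewrite mulr_ge0 ?ptrans_ge0 ?pstep_ge0.
Qed.

Lemma connect_pstep_gt0 (i j : V) :
  connect (tarc faces tau) i j -> exists n, 0 < pstep faces tau R n i j.
Proof. by case/connectP=> p ip ->; exists (size p); exact: pstep_path_gt0. Qed.

End TransitionChain.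

Theorem proposition1 (V : finType) (faces : {set {set V}})
    (tau : {set {set flag V}}) (R : realFieldType) :
  triangulation faces ->
  z_orientation faces tau ->
  (forall v : V, exists u w : V,
      [/\ tarc faces tau v u, tarc faces tau u w & tarc faces tau w v]) /\
  chain_irreducible faces tau R.
Proof.
move=> [[faces3 _ vertex_face _ connected] _] orient.
have triangle := edge_directed_triangle faces3 orient.
split=> [v | i j].
  have [f ff fv] := vertex_face v; have [u fu vu] := card3_other (faces3 _ ff) fv.
  have [w] := triangle f v u ff fv fu vu.
  by case/orP=> /and3P[tvu tuw twv]; [exists u, w | exists w, u].
apply: connect_pstep_gt0; apply: connect_sub (connected i j) => x y.
case/andP=> xy /existsP[f /and3P[ff fx fy]].
have [z tri] := triangle f x y ff fx fy xy.
exact: directed_triangle_connect tri.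
Qed.
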